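(* Let $\mathcal{H}=(C,F,D,G)$ be a hybrid system on $\mathcal{X}$ such that $F$ is outer semicontinuous, locally bounded, with nonempty convex values on $C$, and $G$ has nonempty values on $D$. Let $p$ be an atomic proposition such that $K:=\{x\in\mathcal{X}:p(x)=1\}$ is closed and $K\subset C\cup D$. Suppose there exist a continuously differentiable barrier function candidate $B:\mathcal{X}\to\mathbb{R}$ with respect to $K$ for $\mathcal{H}$ and an open neighborhood $U(\partial K)$ of $\partial K$ such that: (1) $\langle\nabla B(x),\eta\rangle\le0$ for all $x\in C\cap(U(\partial K)\setminus K)$ and all $\eta\in F(x)\cap T_C(x)$; (2) $B(\eta)\le0$ for all $x\in D\cap K$ and all $\eta\in G(x)$; (3) $G(D\cap K)\subset C\cup D$. Then for every solution $\phi$ to $\mathcal{H}$ with $\phi(0,0)\Vdash p$ and every $(t,j)\in\operatorname{dom}\phi$, $(\phi,(t,j))\models\Box p$.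
   Context: Hybrid systems. A hybrid system $\mathcal{H}=(C,F,D,G)$ on a state space $\mathcal{X}\subset\mathbb{R}^n$ is given by a flow set $C\subset\mathcal{X}$, a set-valued flow map $F:\mathcal{X}\rightrightarrows\mathcal{X}$, a jump set $D\subset\mathcal{X}$ and a set-valued jump map $G:\mathcal{X}\rightrightarrows\mathcal{X}$, and represents $\dot x\in F(x)$ for $x\in C$, $x^+\in G(x)$ for $x\in D$. Standing assumptions: $C\subset\operatorname{dom}F$, $D\subset\operatorname{dom}G$, $\overline{C}\cup D\cup G(D)\subset\mathcal{X}$ ($\overline C$ is the closure of $C$). A set $E\subset\mathbb{R}_{\ge0}\times\mathbb{N}$ is a hybrid time domain if for every $(T,J)\in E$ there are $0=t_0\le t_1\le\dots\le t_{J+1}$ with $E\cap([0,T]\times\{0,\dots,J\})=\bigcup_{j=0}^J([t_j,t_{j+1}]\times\{j\})$. A hybrid arc is a map $\phi:\operatorname{dom}\phi\to\mathbb{R}^n$ on a hybrid time domain such that for each $j$, $t\mapsto\phi(t,j)$ is locally absolutely continuous on $I^j=\{t:(t,j)\in\operatorname{dom}\phi\}$. A hybrid arc $\phi$ is a solution to $\mathcal{H}$ if (i) $\phi(0,0)\in\overline C\cup D$; (ii) for each $j$ such that $I^j$ has nonempty interior, $\phi(t,j)\in C$ for all $t\in\operatorname{int}I^j$ and $\dot\phi(t,j)\in F(\phi(t,j))$ for almost all $t\in I^j$; (iii) for each $(t,j)\in\operatorname{dom}\phi$ with $(t,j+1)\in\operatorname{dom}\phi$, $\phi(t,j)\in D$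 and $\phi(t,j+1)\in G(\phi(t,j))$. Temporal logic. An atomic proposition is a function $p:\mathcal{X}\to\{0,1\}$; write $\phi(t,j)\Vdash p$ if $p(\phi(t,j))=1$. $(\phi,(t,j))\models p$ iff $\phi(t,j)\Vdash p$; $(\phi,(t,j))\models\Box p$ iff $(\phi,(t',j'))\models p$ for all $(t',j')\in\operatorname{dom}\phi$ with $t'+j'\ge t+j$. The set $K$ is assumed nonempty. A function $B:\mathcal{X}\to\mathbb{R}$ is a barrier function candidate with respect to $K$ for $\mathcal{H}$ if $B(x)\le0$ for all $x\in K$ and $B(x)>0$ for all $x\in(C\cup D\cup G(D))\setminus K$. The tangent cone $T_C(x)$ of $C$ at $x$ is the set of $w$ for which there exist $x_i\in C$, $\tau_i>0$ with $x_i\to x$, $\tau_i\searrow0$ and $w=\lim_i (x_i-x)/\tau_i$. $\partial K$ is the boundary of $K$. *)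

From Stdlib Require Import Reals Lra List.
From Stdlib Require Vectors.Fin.
Open Scope R_scope.

Definition vec (n : nat) := Fin.t n -> R.

Fixpoint fsum (n : nat) : (Fin.t n -> R) -> R :=
  match n return (Fin.t n -> R) -> R with
  | O => fun _ => 0
  | S m => fun f => f Fin.F1 + fsum m (fun i => f (Fin.FS i))
  end.

Definition vadd {n} (u v : vec n) : vec n := fun i => u i + v i.
Definition vsub {n} (u v : vec n) : vec n := fun i => u i - v i.
Definition vscale {n} (a : R) (u : vec n) : vec n := fun i => a * u i.
Definition dot {n} (u v : vec n) : R := fsum n (fun i => u i * v i).
Definition vnorm {n} (u : vec n) : R := sqrt (dot u u).

(** subsets of R^n as predicates; set-valued maps as relations
    (M x y  means  y \in M(x)) *)
Definition vset n := vec n -> Prop.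
Definition setmap n := vec n -> vec n -> Prop.

Definition closure {n} (S : vset n) : vset n :=
  fun x => forall eps, 0 < eps -> exists y, S y /\ vnorm (vsub y x) < eps.
Definition is_closed {n} (S : vset n) : Prop := forall x, closure S x -> S x.
Definition is_open {n} (S : vset n) : Prop :=
  forall x, S x -> exists r, 0 < r /\ forall y, vnorm (vsub y x) < r -> S y.
Definition boundary {n} (S : vset n) : vset n :=
  fun x => closure S x /\ closure (fun y => ~ S y) x.

Definition vconv {n} (xs : nat -> vec n) (x : vec n) : Prop :=
  forall eps, 0 < eps -> exists N, forall i, (N <= i)%nat -> vnorm (vsub (xs i) x) < eps.

Definition tangent_cone {n} (C : vset n) (x : vec n) : vset n :=
  fun w => exists (xs : nat -> vec n) (taus : nat -> R),
    (forall i, C (xs i)) /\ vconv xs x /\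
    (forall i, 0 < taus i) /\ (forall i, taus (S i) <= taus i) /\ Un_cv taus 0 /\
    vconv (fun i => vscale (/ taus i) (vsub (xs i) x)) w.

Definition dom_map {n} (M : setmap n) : vset n := fun x => exists y, M x y.
Definition image {n} (M : setmap n) (S : vset n) : vset n :=
  fun y => exists x, S x /\ M x y.

Definition outer_semicontinuous {n} (X : vset n) (M : setmap n) : Prop :=
  forall (xs : nat -> vec n) (ys : nat -> vec n) x y,
    (forall i, X (xs i)) -> X x -> vconv xs x ->
    (forall i, M (xs i) (ys i)) -> vconv ys y -> M x y.

Definition locally_bounded {n} (X : vset n) (M : setmap n) : Prop :=
  forall x, X x -> exists r Mb, 0 < r /\
    forall z y, X z -> vnorm (vsub z x) < r -> M z y -> vnorm y <= Mb.

Definition convex_set {n} (S : vset n) : Prop :=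
  forall u v a, S u -> S v -> 0 <= a <= 1 ->
    S (vadd (vscale a u) (vscale (1 - a) v)).

Definition has_gradient {n} (B : vec n -> R) (x g : vec n) : Prop :=
  forall eps, 0 < eps -> exists delta, 0 < delta /\
    forall y, vnorm (vsub y x) < delta ->
      Rabs (B y - B x - dot g (vsub y x)) <= eps * vnorm (vsub y x).

Definition C1_on {n} (X : vset n) (B : vec n -> R) (gradB : vec n -> vec n) : Prop :=
  exists O : vset n, is_open O /\ (forall x, X x -> O x) /\
    (forall x, O x -> has_gradient B x (gradB x)) /\
    (forall x, O x -> forall eps, 0 < eps -> exists delta, 0 < delta /\
        forall y, O y -> vnorm (vsub y x) < delta -> vnorm (vsub (gradB y) (gradB x)) < eps).

Record hybrid_system (n : nat) := {
  hs_X : vset n; hs_C : vset n; hs_F : setmap n; hs_D : vset n; hs_G : setmap n }.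
Arguments hs_X {n}. Arguments hs_C {n}. Arguments hs_F {n}.
Arguments hs_D {n}. Arguments hs_G {n}.

Definition standing_assumptions {n} (H : hybrid_system n) : Prop :=
  (forall x y, hs_F H x y -> hs_X H x /\ hs_X H y) /\
  (forall x y, hs_G H x y -> hs_X H x /\ hs_X H y) /\
  (forall x, hs_C H x -> dom_map (hs_F H) x) /\
  (forall x, hs_D H x -> dom_map (hs_G H) x) /\
  (forall x, closure (hs_C H) x \/ hs_D H x \/ image (hs_G H) (hs_D H) x -> hs_X H x).

Definition hset := R -> nat -> Prop.

Definition hybrid_time_domain (E : hset) : Prop :=
  (forall t j, E t j -> 0 <= t) /\
  forall T J, E T J -> exists tt : nat -> R,
    tt O = 0 /\ (forall j, (j <= J)%nat -> tt j <= tt (S j)) /\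
    forall t j, (E t j /\ 0 <= t <= T /\ (j <= J)%nat) <->
                ((j <= J)%nat /\ tt j <= t <= tt (S j)).

Definition Ij (E : hset) (j : nat) : R -> Prop := fun t => E t j.

Fixpoint nonoverlapping_in (l : list (R * R)) (lo b : R) : Prop :=
  match l with
  | nil => True
  | (c, d) :: r => lo <= c /\ c <= d /\ d <= b /\ nonoverlapping_in r d b
  end.

Definition abs_continuous_on {n} (f : R -> vec n) (a b : R) : Prop :=
  forall eps, 0 < eps -> exists delta, 0 < delta /\
    forall l : list (R * R), nonoverlapping_in l a b ->
      fold_right (fun p s => (snd p - fst p) + s) 0 l < delta ->
      fold_right (fun p s => vnorm (vsub (f (snd p)) (f (fst p))) + s) 0 l < eps.

Definition loc_abs_continuous_on {n} (f : R -> vec n) (I : R -> Prop) : Prop :=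
  forall a b, a <= b -> (forall s, a <= s <= b -> I s) -> abs_continuous_on f a b.

Definition hybrid_arc {n} (E : hset) (phi : R -> nat -> vec n) : Prop :=
  hybrid_time_domain E /\ forall j, loc_abs_continuous_on (fun t => phi t j) (Ij E j).

Definition null_set (N : R -> Prop) : Prop :=
  forall eps, 0 < eps -> exists a b : nat -> R,
    (forall k, a k <= b k) /\ (forall x, N x -> exists k, a k <= x <= b k) /\
    (forall m, sum_f_R0 (fun k => b k - a k) m <= eps).

Definition has_vderiv_within {n} (I : R -> Prop) (f : R -> vec n) (t : R) (v : vec n) : Prop :=
  forall eps, 0 < eps -> exists delta, 0 < delta /\
    forall s, I s -> s <> t -> Rabs (s - t) < delta ->
      vnorm (vsub (vscale (/ (s - t)) (vsub (f s) (f t))) v) < eps.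

Definition interior_R (I : R -> Prop) : R -> Prop :=
  fun t => exists delta, 0 < delta /\ forall s, Rabs (s - t) < delta -> I s.

Definition is_solution {n} (H : hybrid_system n) (E : hset) (phi : R -> nat -> vec n) : Prop :=
  hybrid_arc E phi /\
  E 0 O /\
  (closure (hs_C H) (phi 0 O) \/ hs_D H (phi 0 O)) /\
  (forall j, (exists t, interior_R (Ij E j) t) ->
     (forall t, interior_R (Ij E j) t -> hs_C H (phi t j)) /\
     exists N, null_set N /\
       forall t, Ij E j t -> ~ N t ->
         exists v, has_vderiv_within (Ij E j) (fun s => phi s j) t v /\ hs_F H (phi t j) v) /\
  (forall t j, E t j -> E t (S j) ->
     hs_D H (phi t j) /\ hs_G H (phi t j) (phi t (S j))).

Definition models_always {n} (E : hset) (phi : R -> nat -> vec n) (p : vec n -> bool)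
  (t : R) (j : nat) : Prop :=
  forall t' j', E t' j' -> t' + INR j' >= t + INR j -> p (phi t' j') = true.

Definition barrier_candidate {n} (H : hybrid_system n) (K : vset n) (B : vec n -> R) : Prop :=
  (forall x, K x -> B x <= 0) /\
  (forall x, (hs_C H x \/ hs_D H x \/ image (hs_G H) (hs_D H) x) -> ~ K x -> B x > 0).

From Stdlib Require Import Reals Lra Psatz List FunctionalExtensionality Classical.
Open Scope R_scope.

(* Between jumps a solution starting in K cannot leave it: at the last exit time s the
   state lies on the boundary of K, hence in U, and right after s the arc runs in
   C ∩ U \ K, where B > 0.  There the flow condition and the chain rule give
   (B ∘ phi)' = <∇B, phi'> <= 0 almost everywhere, since phi' ∈ F ∩ T_C; B ∘ phi is
   absolutely continuous, so it is nonincreasing and stays below B (phi s) <= 0, a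
   contradiction.  A jump from K lands in C ∪ D with B <= 0, hence in K, and induction on the
   jump counter concludes.  Monotonicity of an absolutely continuous function with a.e.
   nonpositive derivative is proved by creeping from the left endpoint along a cover of the
   exceptional null set. *)

Lemma fsum_ext n (f g : Fin.t n -> R) : (forall i, f i = g i) -> fsum n f = fsum n g.
Proof.
  induction n as [|n IH]; intros Hfg; simpl; [reflexivity|].
  rewrite Hfg, (IH (fun i => f (Fin.FS i)) (fun i => g (Fin.FS i))); auto.
Qed.

Lemma fsum_add n (f g : Fin.t n -> R) : fsum n (fun i => f i + g i) = fsum n f + fsum n g.
Proof.
  induction n as [|n IH]; simpl; [ring|].
  rewrite (IH (fun i => f (Fin.FS i)) (fun i => g (Fin.FS i))); ring.
Qed.

Lemma fsum_scale n c (f : Fin.t n -> R) : fsum n (fun i => c * f i) = c * fsum n f.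
Proof. induction n as [|n IH]; simpl; [ring|]. rewrite (IH (fun i => f (Fin.FS i))); ring. Qed.

Lemma fsum_nonneg n (f : Fin.t n -> R) : (forall i, 0 <= f i) -> 0 <= fsum n f.
Proof.
  induction n as [|n IH]; intros Hf; simpl; [lra|].
  pose proof (Hf Fin.F1). pose proof (IH (fun i => f (Fin.FS i)) (fun i => Hf _)). lra.
Qed.

Lemma vec_ext {n} (u v : vec n) : (forall i, u i = v i) -> u = v.
Proof. intros; apply functional_extensionality; auto. Qed.

Ltac vec_ring := apply vec_ext; intro; unfold vadd, vsub, vscale; ring.

Lemma dot_comm {n} (u v : vec n) : dot u v = dot v u.
Proof. apply fsum_ext; intros; ring. Qed.

Lemma dot_add_r {n} (u v w : vec n) : dot u (vadd v w) = dot u v + dot u w.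
Proof. unfold dot, vadd. rewrite <- fsum_add. apply fsum_ext; intros; ring. Qed.

Lemma dot_scale_r {n} c (u v : vec n) : dot u (vscale c v) = c * dot u v.
Proof. unfold dot, vscale. rewrite <- fsum_scale. apply fsum_ext; intros; ring. Qed.

Lemma dot_sub_r {n} (u v w : vec n) : dot u (vsub v w) = dot u v - dot u w.
Proof.
  replace (vsub v w) with (vadd v (vscale (-1) w)) by vec_ring.
  rewrite dot_add_r, dot_scale_r; ring.
Qed.

Lemma dot_self_nonneg {n} (u : vec n) : 0 <= dot u u.
Proof. apply fsum_nonneg; intros; nra. Qed.

Lemma discriminant_nonpos a b c : 0 <= c ->
  (forall l, 0 <= a - 2 * l * b + l * l * c) -> b * b <= a * c.
Proof.
  intros Hc Hq. destruct (Req_dec c 0) as [->|Hc0].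
  - destruct (Req_dec b 0) as [->|Hb]; [specialize (Hq 0); nra|].
    specialize (Hq ((a + 1) / (2 * b))).
    replace (a - 2 * ((a + 1) / (2 * b)) * b + (a + 1) / (2 * b) * ((a + 1) / (2 * b)) * 0)
      with (-1) in Hq by (field; auto). lra.
  - specialize (Hq (b / c)).
    replace (a - 2 * (b / c) * b + b / c * (b / c) * c) with ((a * c - b * b) / c) in Hq
      by (field; auto).
    assert (E : (a * c - b * b) / c * c = a * c - b * b) by (field; auto).
    pose proof (Rmult_le_pos _ _ Hq Hc). lra.
Qed.

Lemma cauchy_schwarz {n} (u v : vec n) : dot u v * dot u v <= dot u u * dot v v.
Proof.
  apply discriminant_nonpos; [apply dot_self_nonneg|]. intros l.
  replace (dot u u - 2 * l * dot u v + l * l * dot v v)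
    with (dot (vsub u (vscale l v)) (vsub u (vscale l v))); [apply dot_self_nonneg|].
  rewrite !dot_sub_r, !(dot_comm (vsub _ _)), !dot_sub_r, !dot_scale_r.
  rewrite !(dot_comm (vscale _ _)), !dot_scale_r. ring.
Qed.

Lemma vnorm_nonneg {n} (u : vec n) : 0 <= vnorm u.
Proof. apply sqrt_pos. Qed.

Lemma vnorm_sq {n} (u : vec n) : vnorm u * vnorm u = dot u u.
Proof. apply sqrt_sqrt, dot_self_nonneg. Qed.

Lemma Rabs_dot_le {n} (u v : vec n) : Rabs (dot u v) <= vnorm u * vnorm v.
Proof.
  unfold vnorm. rewrite <- sqrt_mult_alt by apply dot_self_nonneg.
  rewrite <- sqrt_Rsqr_abs. apply sqrt_le_1_alt, cauchy_schwarz.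
Qed.

Lemma vnorm_scale {n} c (u : vec n) : vnorm (vscale c u) = Rabs c * vnorm u.
Proof.
  unfold vnorm. rewrite dot_scale_r, dot_comm, dot_scale_r, <- Rmult_assoc.
  rewrite sqrt_mult_alt by nra. rewrite <- sqrt_Rsqr_abs. reflexivity.
Qed.

Lemma vnorm_triangle {n} (u v : vec n) : vnorm (vadd u v) <= vnorm u + vnorm v.
Proof.
  pose proof (Rle_abs (dot u v)). pose proof (Rabs_dot_le u v).
  pose proof (vnorm_nonneg u). pose proof (vnorm_nonneg v).
  apply Rsqr_incr_0_var; [|nra]. unfold Rsqr.
  rewrite (vnorm_sq (vadd u v)), !dot_add_r, !(dot_comm (vadd _ _)), !dot_add_r.
  rewrite (dot_comm v u), <- (vnorm_sq u), <- (vnorm_sq v). nra.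
Qed.

Lemma vnorm_sub_diag {n} (x : vec n) : vnorm (vsub x x) = 0.
Proof. replace (vsub x x) with (vscale 0 x) by vec_ring. rewrite vnorm_scale, Rabs_R0; ring. Qed.

Lemma vnorm_sub_sym {n} (x y : vec n) : vnorm (vsub x y) = vnorm (vsub y x).
Proof.
  replace (vsub x y) with (vscale (-1) (vsub y x)) by vec_ring.
  rewrite vnorm_scale, Rabs_left by lra; ring.
Qed.

Lemma vnorm_le_sub_add {n} (x y : vec n) : vnorm x <= vnorm (vsub x y) + vnorm y.
Proof. replace x with (vadd (vsub x y) y) at 1 by vec_ring. apply vnorm_triangle. Qed.

Lemma ball_convex {n} (x0 : vec n) r : convex_set (fun y => vnorm (vsub y x0) < r).
Proof.
  intros u v l Hu Hv Hl.
  replace (vsub (vadd (vscale l u) (vscale (1 - l) v)) x0)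
    with (vadd (vscale l (vsub u x0)) (vscale (1 - l) (vsub v x0))) by vec_ring.
  eapply Rle_lt_trans; [apply vnorm_triangle|].
  rewrite !vnorm_scale, (Rabs_right l), (Rabs_right (1 - l)) by lra.
  destruct (Req_dec l 0) as [->|Hl0]; [lra|nra].
Qed.

Definition length_sum (l : list (R * R)) : R :=
  fold_right (fun p s => snd p - fst p + s) 0 l.

Definition increment_sum (g : R -> R) (l : list (R * R)) : R :=
  fold_right (fun p s => g (snd p) - g (fst p) + s) 0 l.

Definition variation_sum {n} (psi : R -> vec n) (l : list (R * R)) : R :=
  fold_right (fun p s => vnorm (vsub (psi (snd p)) (psi (fst p))) + s) 0 l.

Definition index_sum (f : nat -> R) (ks : list nat) : R :=
  fold_right (fun k s => f k + s) 0 ks.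

Definition dini_nonpos_at (a b : R) (g : R -> R) (t : R) : Prop :=
  forall eps, 0 < eps -> exists delta, 0 < delta /\
    forall u, a <= u <= b -> Rabs (u - t) < delta ->
      (t < u -> g u - g t <= eps * (u - t)) /\ (u < t -> g t - g u <= eps * (t - u)).

Definition tagged_in (lo hi : nat -> R) (l : list ((R * R) * nat)) : Prop :=
  forall x, In x l -> lo (snd x) <= fst (fst x) /\ snd (fst x) <= hi (snd x).

Definition small_increment_cover (a b : R) (g : R -> R) (N : R -> Prop) : Prop :=
  forall eps, 0 < eps -> exists lo hi : nat -> R,
    (forall t, a <= t <= b -> N t -> exists k, lo k < t < hi k) /\
    (forall l, nonoverlapping_in (map fst l) a b -> NoDup (map snd l) -> tagged_in lo hi l ->
       increment_sum g (map fst l) < eps).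

Definition increments_abs_continuous (a b : R) (g : R -> R) : Prop :=
  forall eps, 0 < eps -> exists delta, 0 < delta /\
    forall l, nonoverlapping_in l a b -> length_sum l < delta -> increment_sum g l < eps.

Lemma nonoverlapping_in_widen l lo b b' :
  nonoverlapping_in l lo b -> b <= b' -> nonoverlapping_in l lo b'.
Proof.
  revert lo. induction l as [|[c d] l IH]; simpl; intros lo Hl Hb; auto.
  destruct Hl as (? & ? & ? & ?). repeat split; auto; lra.
Qed.

Lemma nonoverlapping_in_snoc l lo b c d :
  nonoverlapping_in l lo b -> lo <= b -> b <= c <= d ->
  nonoverlapping_in (l ++ (c, d) :: nil) lo d.
Proof.
  revert lo. induction l as [|[c' d'] l IH]; simpl; intros lo Hl Hlo Hcd.
  - repeat split; lra.
  - destruct Hl as (? & ? & ? & ?). repeat split; auto; lra.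
Qed.

Lemma increment_sum_snoc g l c d :
  increment_sum g (l ++ (c, d) :: nil) = increment_sum g l + (g d - g c).
Proof. induction l as [|x l IH]; simpl; [ring|]. rewrite IH; ring. Qed.

Lemma lub_approx (S : R -> Prop) s : is_lub S s ->
  forall r, 0 < r -> exists u, S u /\ s - r < u <= s.
Proof.
  intros [Hub Hleast] r Hr. apply NNPP; intro Hno.
  assert (s <= s - r); [|lra].
  apply Hleast. intros u Su. apply Rnot_lt_le; intro Hu.
  apply Hno. exists u. split; [exact Su|]. split; [lra|]. apply Hub, Su.
Qed.

Section Creeping.

Variables (a b : R) (g : R -> R) (N : R -> Prop) (eps : R) (lo hi : nat -> R).
Hypothesis eps_gt0 : 0 < eps.

(* [t] is reached from [a] by stretches on which [g] grows at rate at most [eps],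
   alternating with crossings of cover intervals. *)
Definition creep_reachable (t : R) : Prop :=
  a <= t <= b /\ exists l : list ((R * R) * nat),
    nonoverlapping_in (map fst l) a t /\ NoDup (map snd l) /\ tagged_in lo hi l /\
    (forall k, In k (map snd l) -> hi k <= t \/ t = b) /\
    g t <= g a + eps * (t - a) + increment_sum g (map fst l).

Lemma creep_reachable_start : a <= b -> creep_reachable a.
Proof.
  intros Hab. split; [lra|]. exists nil; simpl.
  split; [exact I|]. split; [constructor|]. split; [intros ? []|]. split; [intros ? []|].
  unfold increment_sum; simpl; lra.
Qed.

Lemma creep_reachable_flat u t : creep_reachable u -> u <= t <= b ->
  g t - g u <= eps * (t - u) -> creep_reachable t.
Proof.
  intros [Hu (l & Hl & Hnd & Htag & Hpassed & Hg)] Ht Hgt. split; [lra|].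
  exists l. split; [|split; [exact Hnd|split; [exact Htag|split]]].
  - apply nonoverlapping_in_widen with u; auto; lra.
  - intros k Hk. destruct (Hpassed k Hk); [left|right]; lra.
  - lra.
Qed.

Lemma creep_reachable_jump u k : creep_reachable u -> u < b -> lo k < u < hi k ->
  creep_reachable (Rmin (hi k) b).
Proof.
  intros [Hu (l & Hl & Hnd & Htag & Hpassed & Hg)] Hub Hk.
  assert (Hfresh : ~ In k (map snd l)) by (intro Hin; destruct (Hpassed k Hin); lra).
  set (t := Rmin (hi k) b).
  assert (Ht : u < t <= b /\ t <= hi k).
  { unfold t, Rmin; destruct (Rle_dec (hi k) b); lra. }
  split; [lra|]. exists (l ++ ((u, t), k) :: nil). rewrite !map_app; simpl.
  split; [|split; [|split; [|split]]].
  - apply nonoverlapping_in_snoc with u; auto; lra.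
  - apply NoDup_app; [exact Hnd|repeat constructor; simpl; tauto|].
    intros k' Hk' [<-|[]]. contradiction.
  - intros x Hx. apply in_app_or in Hx. destruct Hx as [Hx|[<-|[]]]; [apply Htag, Hx|simpl; lra].
  - intros k' Hk'. apply in_app_or in Hk'. destruct Hk' as [Hk'|[<-|[]]].
    + destruct (Hpassed k' Hk'); [left|right]; lra.
    + unfold t, Rmin; destruct (Rle_dec (hi k) b); [left|right]; lra.
  - rewrite increment_sum_snoc. nra.
Qed.

Hypothesis N_covered : forall t, a <= t <= b -> N t -> exists k, lo k < t < hi k.
Hypothesis dini_off_N : forall t, a <= t <= b -> ~ N t -> dini_nonpos_at a b g t.

Lemma creep_reachable_end : a <= b -> creep_reachable b.
Proof.
  intros Hab.
  assert (Hbd : bound creep_reachable) by (exists b; intros t [Ht _]; lra).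
  destruct (completeness _ Hbd (ex_intro _ a (creep_reachable_start Hab))) as [s Hs].
  assert (Has : a <= s) by apply (proj1 Hs), creep_reachable_start, Hab.
  assert (Hsb : s <= b) by (apply (proj2 Hs); intros t [Ht _]; lra).
  destruct (classic (N s)) as [Ns|Ns].
  - destruct (N_covered s (conj Has Hsb) Ns) as [k Hk].
    destruct (lub_approx _ _ Hs (s - lo k)) as [u [Ru Hu]]; [lra|].
    destruct (Req_dec u b) as [<-|Hub]; [exact Ru|].
    pose proof (creep_reachable_jump u k Ru ltac:(destruct Ru; lra) ltac:(lra)) as Rt.
    pose proof (proj1 Hs _ Rt) as Hts.
    replace b with (Rmin (hi k) b) by (unfold Rmin in *; destruct (Rle_dec (hi k) b); lra).
    exact Rt.
  - destruct (dini_off_N s (conj Has Hsb) Ns eps eps_gt0) as [d [Hd Hdini]].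
    assert (Rs : creep_reachable s).
    { destruct (lub_approx _ _ Hs d Hd) as [u [Ru Hu]].
      destruct (Req_dec u s) as [<-|Hus]; [exact Ru|].
      apply (creep_reachable_flat u); [exact Ru|lra|].
      apply (Hdini u); [destruct Ru; lra|apply Rabs_def1; lra|lra]. }
    destruct (Req_dec s b) as [<-|Hsb']; [exact Rs|exfalso].
    set (t := Rmin (s + d / 2) b).
    assert (Ht : s < t <= b /\ t <= s + d / 2) by (unfold t, Rmin; destruct Rle_dec; lra).
    assert (Rt : creep_reachable t).
    { apply (creep_reachable_flat s); [exact Rs|lra|].
      apply (Hdini t); [lra|apply Rabs_def1; lra|lra]. }
    pose proof (proj1 Hs _ Rt). lra.
Qed.

End Creeping.

Lemma nonincreasing_of_dini_nonpos_off a b g N : a <= b ->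
  small_increment_cover a b g N ->
  (forall t, a <= t <= b -> ~ N t -> dini_nonpos_at a b g t) -> g b <= g a.
Proof.
  intros Hab Hcov Hdini. apply Rnot_lt_le; intro Hlt.
  set (eps := (g b - g a) / (2 * (b - a + 1))).
  assert (Heps : 0 < eps) by (apply Rdiv_lt_0_compat; lra).
  destruct (Hcov eps Heps) as (lo & hi & Hc & Hsmall).
  destruct (creep_reachable_end a b g N eps lo hi Heps Hc Hdini Hab)
    as [_ (l & Hl & Hnd & Htag & _ & Hg)].
  pose proof (Hsmall l Hl Hnd Htag).
  assert (eps * (b - a) + eps = (g b - g a) / 2) by (unfold eps; field; lra).
  lra.
Qed.

Lemma nonincreasing_of_dini_nonpos a b g : a <= b ->
  (forall t, a <= t <= b -> dini_nonpos_at a b g t) -> g b <= g a.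
Proof.
  intros Hab Hdini. apply (nonincreasing_of_dini_nonpos_off a b g (fun _ => False)); auto.
  intros eps Heps. exists (fun _ => 1), (fun _ => 0). split; [tauto|].
  intros [|[[c d] k] l] Hl _ Htag; [unfold increment_sum; simpl; lra|].
  destruct (Htag _ (or_introl eq_refl)). simpl in *. lra.
Qed.

Lemma length_sum_le_index_sum lo hi (l : list ((R * R) * nat)) : tagged_in lo hi l ->
  length_sum (map fst l) <= index_sum (fun k => hi k - lo k) (map snd l).
Proof.
  induction l as [|x l IH]; intros Htag; simpl; [lra|].
  destruct (Htag x (or_introl eq_refl)).
  assert (length_sum (map fst l) <= index_sum (fun k => hi k - lo k) (map snd l))
    by (apply IH; intros y Hy; apply Htag; right; exact Hy).
  unfold length_sum, index_sum in *. simpl. lra.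
Qed.

Lemma index_sum_le_sum_f_R0 (f : nat -> R) : (forall k, 0 <= f k) ->
  forall m ks, NoDup ks -> (forall k, In k ks -> (k <= m)%nat) -> index_sum f ks <= sum_f_R0 f m.
Proof.
  intros Hf m. induction m as [|m IH]; intros ks Hnd Hle.
  - destruct ks as [|k ks]; simpl; [apply Hf|].
    assert (k = O) by (apply Nat.le_0_r, Hle; left; reflexivity). subst k.
    destruct ks as [|k ks]; [simpl; lra|].
    assert (k = O) by (apply Nat.le_0_r, Hle; right; left; reflexivity). subst k.
    inversion Hnd as [|? ? Hnin]. exfalso; apply Hnin; left; reflexivity.
  - simpl. destruct (in_dec Nat.eq_dec (S m) ks) as [Hin|Hnin].
    + destruct (in_split _ _ Hin) as (l1 & l2 & ->).
      assert (Hsplit : index_sum f (l1 ++ S m :: l2) = f (S m) + index_sum f (l1 ++ l2)).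
      { clear Hin Hnd Hle. unfold index_sum.
        induction l1 as [|k l1 IH1]; simpl; [reflexivity|]. rewrite IH1; ring. }
      rewrite Hsplit.
      assert (index_sum f (l1 ++ l2) <= sum_f_R0 f m); [|lra].
      apply IH; [apply NoDup_remove_1 with (S m); exact Hnd|].
      intros k Hk. pose proof (NoDup_remove_2 _ _ _ Hnd).
      assert (k <> S m) by (intros ->; contradiction).
      assert (k <= S m)%nat by (apply Hle, in_or_app; apply in_app_or in Hk; simpl; tauto).
      lia.
    + assert (index_sum f ks <= sum_f_R0 f m); [|pose proof (Hf (S m)); lra].
      apply IH; [exact Hnd|]. intros k Hk.
      assert (k <> S m) by (intros ->; contradiction). specialize (Hle k Hk). lia.
Qed.

Lemma sum_pow_half_le m : sum_f_R0 (pow (/ 2)) m <= 2.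
Proof.
  rewrite tech3 by lra. pose proof (pow_lt (/ 2) (S m) ltac:(lra)).
  replace ((1 - (/ 2) ^ S m) / (1 - / 2)) with (2 - 2 * (/ 2) ^ S m) by field. lra.
Qed.

(* Enlarging the k-th interval of the null cover by [d/8 * 2^-k] on each side makes it
   open while keeping the total length below [d]. *)
Lemma small_increment_cover_of_null_set a b g N :
  null_set N -> increments_abs_continuous a b g -> small_increment_cover a b g N.
Proof.
  intros HN Hac eps Heps.
  destruct (Hac eps Heps) as [d [Hd Hsmall]].
  destruct (HN (d / 4)) as (al & be & Hab & Hcov & Hsum); [lra|].
  set (rho := fun k => d / 8 * (/ 2) ^ k).
  assert (Hrho : forall k, 0 < rho k).
  { intro k. unfold rho. pose proof (pow_lt (/ 2) k ltac:(lra)). nra. }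
  exists (fun k => al k - rho k), (fun k => be k + rho k). split.
  - intros t Ht Nt. destruct (Hcov t Nt) as [k Hk]. exists k. specialize (Hrho k). lra.
  - intros l Hl Hnd Htag. apply Hsmall; [exact Hl|].
    eapply Rle_lt_trans; [apply length_sum_le_index_sum, Htag|].
    eapply Rle_lt_trans.
    { apply index_sum_le_sum_f_R0 with (m := list_max (map snd l)); [|exact Hnd|].
      - intro k. specialize (Hab k). specialize (Hrho k). lra.
      - intros k Hk. apply (proj1 (Forall_forall _ _) (proj1 (list_max_le _ _) (le_n _)) k Hk). }
    rewrite (sum_eq _ (fun k => (be k - al k) + (/ 2) ^ k * (d / 4)))
      by (intros k _; unfold rho; field).
    rewrite sum_plus, <- scal_sum.
    pose proof (Hsum (list_max (map snd l))). pose proof (sum_pow_half_le (list_max (map snd l))).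
    nra.
Qed.

Lemma nonincreasing_of_dini_nonpos_ae a b g N : a <= b -> null_set N ->
  increments_abs_continuous a b g ->
  (forall t, a <= t <= b -> ~ N t -> dini_nonpos_at a b g t) -> g b <= g a.
Proof.
  intros Hab HN Hac. apply nonincreasing_of_dini_nonpos_off; auto.
  apply small_increment_cover_of_null_set; auto.
Qed.

Lemma increment_sum_le_variation_sum {n} (g : R -> R) (psi : R -> vec n) L a b :
  (forall c d, a <= c -> c <= d -> d <= b -> g d - g c <= L * vnorm (vsub (psi d) (psi c))) ->
  forall l lo, a <= lo -> nonoverlapping_in l lo b ->
  increment_sum g l <= L * variation_sum psi l.
Proof.
  intros Hlip l. induction l as [|[c d] l IH]; simpl; intros lo Hlo Hl.
  - unfold increment_sum, variation_sum; simpl; lra.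
  - destruct Hl as (? & ? & ? & ?).
    specialize (Hlip c d ltac:(lra) ltac:(lra) ltac:(lra)).
    specialize (IH d ltac:(lra) ltac:(assumption)).
    unfold increment_sum, variation_sum in *; simpl. lra.
Qed.

Lemma increments_abs_continuous_of_lipschitz {n} (g : R -> R) (psi : R -> vec n) L a b :
  0 < L -> abs_continuous_on psi a b ->
  (forall c d, a <= c -> c <= d -> d <= b -> g d - g c <= L * vnorm (vsub (psi d) (psi c))) ->
  increments_abs_continuous a b g.
Proof.
  intros HL Hac Hlip eps Heps.
  destruct (Hac (eps / L)) as [d [Hd Hvar]]; [apply Rdiv_lt_0_compat; lra|].
  exists d; split; [exact Hd|]. intros l Hl Hlen.
  pose proof (increment_sum_le_variation_sum g psi L a b Hlip l a (Rle_refl a) Hl).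
  specialize (Hvar l Hl Hlen). fold (variation_sum psi l) in Hvar.
  apply Rmult_lt_compat_l with (r := L) in Hvar; [|exact HL].
  replace (L * (eps / L)) with eps in Hvar by (field; lra). lra.
Qed.

Definition vcontinuous_on {n} (psi : R -> vec n) (a b : R) : Prop :=
  forall t, a <= t <= b -> forall eps, 0 < eps -> exists delta, 0 < delta /\
    forall u, a <= u <= b -> Rabs (u - t) < delta -> vnorm (vsub (psi u) (psi t)) < eps.

Lemma abs_continuous_on_continuous {n} (psi : R -> vec n) a b :
  abs_continuous_on psi a b -> vcontinuous_on psi a b.
Proof.
  intros Hac t Ht eps Heps. destruct (Hac eps Heps) as [d [Hd Hvar]].
  exists d; split; [exact Hd|]. intros u Hu Hut.
  destruct (Rle_dec t u) as [Htu|Hut'].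
  - specialize (Hvar ((t, u) :: nil)). simpl in Hvar. rewrite Rabs_right in Hut by lra.
    assert (vnorm (vsub (psi u) (psi t)) + 0 < eps) by (apply Hvar; [repeat split; lra|lra]).
    lra.
  - specialize (Hvar ((u, t) :: nil)). simpl in Hvar. rewrite Rabs_left in Hut by lra.
    assert (vnorm (vsub (psi t) (psi u)) + 0 < eps) by (apply Hvar; [repeat split; lra|lra]).
    rewrite vnorm_sub_sym. lra.
Qed.

Lemma has_vderiv_within_approx {n} I (psi : R -> vec n) t v : has_vderiv_within I psi t v ->
  forall eps, 0 < eps -> exists delta, 0 < delta /\ forall s, I s -> Rabs (s - t) < delta ->
    vnorm (vsub (vsub (psi s) (psi t)) (vscale (s - t) v)) <= eps * Rabs (s - t).
Proof.
  intros Hv eps Heps. destruct (Hv eps Heps) as [d [Hd Hq]].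
  exists d; split; [exact Hd|]. intros s Is Hst.
  destruct (Req_dec s t) as [->|Hne].
  - replace (vsub (vsub (psi t) (psi t)) (vscale (t - t) v)) with (vscale 0 v) by vec_ring.
    rewrite vnorm_scale, Rminus_diag, Rabs_R0. lra.
  - replace (vsub (vsub (psi s) (psi t)) (vscale (s - t) v))
      with (vscale (s - t) (vsub (vscale (/ (s - t)) (vsub (psi s) (psi t))) v)).
    + rewrite vnorm_scale. specialize (Hq s Is Hne Hst). pose proof (Rabs_pos (s - t)). nra.
    + apply vec_ext; intro; unfold vsub, vscale. field. intro; apply Hne; lra.
Qed.

Lemma has_vderiv_within_local_lipschitz {n} I (psi : R -> vec n) t v :
  has_vderiv_within I psi t v -> exists delta, 0 < delta /\ forall s, I s -> Rabs (s - t) < delta ->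
    vnorm (vsub (psi s) (psi t)) <= (vnorm v + 1) * Rabs (s - t).
Proof.
  intros Hv. destruct (has_vderiv_within_approx I psi t v Hv 1 Rlt_0_1) as [d [Hd Happ]].
  exists d; split; [exact Hd|]. intros s Is Hst.
  replace (vsub (psi s) (psi t))
    with (vadd (vsub (vsub (psi s) (psi t)) (vscale (s - t) v)) (vscale (s - t) v)) by vec_ring.
  eapply Rle_trans; [apply vnorm_triangle|]. rewrite vnorm_scale.
  specialize (Happ s Is Hst). lra.
Qed.

Lemma has_gradient_chain {n} (B : vec n -> R) (G : vec n) I (psi : R -> vec n) t v :
  has_gradient B (psi t) G -> has_vderiv_within I psi t v ->
  forall eps, 0 < eps -> exists delta, 0 < delta /\ forall u, I u -> Rabs (u - t) < delta ->
    Rabs (B (psi u) - B (psi t) - (u - t) * dot G v) <= eps * Rabs (u - t).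
Proof.
  intros HG Hv eps Heps.
  set (nv := vnorm v). set (nG := vnorm G).
  assert (Hnv : 0 <= nv) by apply vnorm_nonneg. assert (HnG : 0 <= nG) by apply vnorm_nonneg.
  set (e1 := eps / (2 * (nv + 1))). set (e2 := eps / (2 * (nG + 1))).
  assert (He1 : 0 < e1) by (apply Rdiv_lt_0_compat; lra).
  assert (He2 : 0 < e2) by (apply Rdiv_lt_0_compat; lra).
  destruct (has_vderiv_within_local_lipschitz I psi t v Hv) as [d0 [Hd0 Hlip]].
  destruct (HG e1 He1) as [d1 [Hd1 Hgrad]].
  destruct (has_vderiv_within_approx I psi t v Hv e2 He2) as [d2 [Hd2 Happ]].
  set (delta := Rmin d0 (Rmin d2 (d1 / (nv + 1)))).
  assert (Hdelta : delta <= d0 /\ delta <= d2 /\ delta <= d1 / (nv + 1)).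
  { unfold delta, Rmin; repeat destruct Rle_dec; lra. }
  assert (Hd1' : 0 < d1 / (nv + 1)) by (apply Rdiv_lt_0_compat; lra).
  exists delta. split; [unfold delta, Rmin; repeat destruct Rle_dec; lra|].
  intros u Iu Hu. pose proof (Rabs_pos (u - t)) as Hut.
  set (w := vsub (vsub (psi u) (psi t)) (vscale (u - t) v)).
  assert (Hw : vnorm w <= e2 * Rabs (u - t)) by (apply Happ; [exact Iu|lra]).
  assert (Hstep : vnorm (vsub (psi u) (psi t)) <= (nv + 1) * Rabs (u - t))
    by (apply Hlip; [exact Iu|lra]).
  assert (Hnear : vnorm (vsub (psi u) (psi t)) < d1).
  { assert ((nv + 1) * Rabs (u - t) < (nv + 1) * (d1 / (nv + 1))) by (apply Rmult_lt_compat_l; lra).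
    replace ((nv + 1) * (d1 / (nv + 1))) with d1 in * by (field; lra). lra. }
  specialize (Hgrad (psi u) Hnear).
  replace (B (psi u) - B (psi t) - (u - t) * dot G v)
    with ((B (psi u) - B (psi t) - dot G (vsub (psi u) (psi t))) + dot G w)
    by (unfold w; rewrite !dot_sub_r, dot_scale_r; ring).
  eapply Rle_trans; [apply Rabs_triang|].
  pose proof (Rabs_dot_le G w) as HGw. fold nG in HGw.
  assert (E1 : e1 * (nv + 1) = eps / 2) by (unfold e1; field; lra).
  assert (E2 : nG * e2 = eps / 2 - e2) by (unfold e2; field; lra).
  assert (e1 * vnorm (vsub (psi u) (psi t)) <= e1 * ((nv + 1) * Rabs (u - t)))
    by (apply Rmult_le_compat_l; lra).
  assert (nG * vnorm w <= nG * (e2 * Rabs (u - t))) by (apply Rmult_le_compat_l; lra).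
  nra.
Qed.

Lemma dini_nonpos_of_derivative a b g t c : c <= 0 ->
  (forall eps, 0 < eps -> exists delta, 0 < delta /\ forall u, a <= u <= b -> Rabs (u - t) < delta ->
     Rabs (g u - g t - (u - t) * c) <= eps * Rabs (u - t)) -> dini_nonpos_at a b g t.
Proof.
  intros Hc Hder eps Heps. destruct (Hder eps Heps) as [d [Hd Happ]].
  exists d; split; [exact Hd|]. intros u Hu Hut. specialize (Happ u Hu Hut).
  pose proof (Rle_abs (g u - g t - (u - t) * c)).
  pose proof (Rle_abs (- (g u - g t - (u - t) * c))). rewrite Rabs_Ropp in *.
  split; intros Hlt.
  - rewrite (Rabs_right (u - t)) in Happ by lra. nra.
  - rewrite (Rabs_left (u - t)) in Happ by lra. nra.
Qed.

Lemma has_vderiv_within_segment {n} I (y z : vec n) t :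
  has_vderiv_within I (fun l => vadd (vscale l z) (vscale (1 - l) y)) t (vsub z y).
Proof.
  intros eps Heps. exists 1; split; [lra|]. intros s _ Hst _.
  replace (vsub (vscale (/ (s - t)) (vsub (vadd (vscale s z) (vscale (1 - s) y))
                                          (vadd (vscale t z) (vscale (1 - t) y)))) (vsub z y))
    with (vscale 0 z).
  - rewrite vnorm_scale, Rabs_R0. lra.
  - apply vec_ext; intro; unfold vsub, vadd, vscale. field. intro; apply Hst; lra.
Qed.

Lemma lipschitz_of_gradient_bound {n} (S : vset n) (B : vec n -> R) gradB L :
  convex_set S -> (forall y, S y -> has_gradient B y (gradB y) /\ vnorm (gradB y) <= L) ->
  forall y z, S y -> S z -> B z - B y <= L * vnorm (vsub z y).
Proof.
  intros Sconv HB y z Sy Sz.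
  set (w := vsub z y). set (path := fun l => vadd (vscale l z) (vscale (1 - l) y)).
  set (h := fun l => B (path l) - L * l * vnorm w).
  assert (Hh : h 1 <= h 0).
  { apply nonincreasing_of_dini_nonpos; [lra|]. intros t Ht.
    destruct (HB (path t) (Sconv z y t Sz Sy Ht)) as [Hg HL].
    apply dini_nonpos_of_derivative with (dot (gradB (path t)) w - L * vnorm w).
    - pose proof (Rle_abs (dot (gradB (path t)) w)). pose proof (Rabs_dot_le (gradB (path t)) w).
      pose proof (vnorm_nonneg w). nra.
    - intros eps Heps.
      destruct (has_gradient_chain B _ (fun l => 0 <= l <= 1) path t w Hg
                  (has_vderiv_within_segment _ y z t) eps Heps) as [d [Hd Hch]].
      exists d; split; [exact Hd|]. intros u Hu Hut. unfold h.
      replace (B (path u) - L * u * vnorm w - (B (path t) - L * t * vnorm w)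
               - (u - t) * (dot (gradB (path t)) w - L * vnorm w))
        with (B (path u) - B (path t) - (u - t) * dot (gradB (path t)) w) by ring.
      apply Hch; assumption. }
  unfold h in Hh. replace (path 1) with z in Hh by (unfold path; vec_ring).
  replace (path 0) with y in Hh by (unfold path; vec_ring). lra.
Qed.

Lemma C1_on_local_gradient_bound {n} (X : vset n) B gradB x0 : C1_on X B gradB -> X x0 ->
  exists r L, 0 < r /\ 0 < L /\ forall y, vnorm (vsub y x0) < r ->
    has_gradient B y (gradB y) /\ vnorm (gradB y) <= L.
Proof.
  intros (O & HO & HXO & Hgrad & Hcont) Hx0.
  destruct (HO x0 (HXO x0 Hx0)) as [rO [HrO HOball]].
  destruct (Hcont x0 (HXO x0 Hx0) 1 Rlt_0_1) as [d [Hd Hgc]].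
  exists (Rmin rO d), (vnorm (gradB x0) + 1).
  pose proof (vnorm_nonneg (gradB x0)). pose proof (Rmin_l rO d). pose proof (Rmin_r rO d).
  split; [apply Rmin_glb_lt; assumption|]. split; [lra|].
  intros y Hy. assert (Oy : O y) by (apply HOball; lra).
  split; [apply Hgrad, Oy|].
  pose proof (Hgc y Oy ltac:(lra)). pose proof (vnorm_le_sub_add (gradB y) (gradB x0)). lra.
Qed.

Lemma C1_on_lipschitz_ball {n} (X V : vset n) B gradB x0 :
  C1_on X B gradB -> X x0 -> is_open V -> V x0 ->
  exists r L, 0 < r /\ 0 < L /\
    (forall y, vnorm (vsub y x0) < r -> V y /\ has_gradient B y (gradB y)) /\
    (forall y z, vnorm (vsub y x0) < r -> vnorm (vsub z x0) < r ->
       B z - B y <= L * vnorm (vsub z y)).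
Proof.
  intros HB Hx0 HV Vx0.
  destruct (HV x0 Vx0) as [rV [HrV HVball]].
  destruct (C1_on_local_gradient_bound X B gradB x0 HB Hx0) as (rB & L & HrB & HL & HBball).
  exists (Rmin rV rB), L.
  assert (Hr : 0 < Rmin rV rB /\ Rmin rV rB <= rV /\ Rmin rV rB <= rB)
    by (unfold Rmin; destruct Rle_dec; lra).
  split; [lra|]. split; [exact HL|]. split.
  - intros y Hy. split; [apply HVball; lra|apply HBball; lra].
  - apply lipschitz_of_gradient_bound with gradB; [apply ball_convex|].
    intros y Hy. apply HBball. lra.
Qed.

Lemma div_succ_eventually_lt h d : 0 < h -> 0 < d ->
  exists N, forall i, (N <= i)%nat -> h / (INR i + 1) < d.
Proof.
  intros Hh Hd. destruct (archimed_cor1 (d / h)) as [N [HN HN0]]; [apply Rdiv_lt_0_compat; auto|].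
  exists N. intros i Hi. apply le_INR in Hi. assert (0 < INR N) by (apply lt_0_INR; auto).
  apply Rmult_lt_reg_r with (/ h); [apply Rinv_0_lt_compat; auto|].
  replace (h / (INR i + 1) * / h) with (/ (INR i + 1)) by (field; lra).
  apply Rle_lt_trans with (/ INR N); [apply Rinv_le_contravar; lra|].
  replace (d * / h) with (d / h) by reflexivity. exact HN.
Qed.

Lemma tangent_cone_of_vderiv {n} (C : vset n) I (psi : R -> vec n) a b t v :
  a < t < b -> (forall s, a < s < b -> C (psi s)) -> (forall s, a <= s <= b -> I s) ->
  has_vderiv_within I psi t v -> tangent_cone C (psi t) v.
Proof.
  intros Ht HC HI Hv.
  set (h := (b - t) / 2). assert (Hh : 0 < h) by (unfold h; lra).
  set (tau := fun i : nat => h / (INR i + 1)).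
  assert (Htau : forall i, 0 < tau i <= h).
  { intro i. pose proof (pos_INR i).
    assert (E : tau i * (INR i + 1) = h) by (unfold tau; field; lra).
    assert (0 < tau i) by (apply Rdiv_lt_0_compat; lra). split; nra. }
  assert (Hin : forall i, a < t + tau i < b /\ I (t + tau i)).
  { intro i. specialize (Htau i). unfold h in Htau. split; [lra|apply HI; lra]. }
  assert (Hsmall : forall d, 0 < d -> exists N, forall i, (N <= i)%nat -> tau i < d)
    by (intros; apply div_succ_eventually_lt; assumption).
  exists (fun i => psi (t + tau i)), tau.
  split; [intro i; apply HC, Hin|]. split; [|split; [|split; [|split]]].
  - intros eps Heps.
    destruct (has_vderiv_within_local_lipschitz I psi t v Hv) as [d [Hd Hlip]].
    set (nv := vnorm v). assert (0 <= nv) by apply vnorm_nonneg.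
    destruct (Hsmall (Rmin d (eps / (nv + 1)))) as [N HN].
    { apply Rmin_glb_lt; [exact Hd|apply Rdiv_lt_0_compat; lra]. }
    exists N. intros i Hi. specialize (HN i Hi).
    pose proof (Rmin_l d (eps / (nv + 1))). pose proof (Rmin_r d (eps / (nv + 1))).
    destruct (Htau i). replace (eps) with ((nv + 1) * (eps / (nv + 1))) by (field; lra).
    eapply Rle_lt_trans.
    + apply Hlip; [apply Hin|]. replace (t + tau i - t) with (tau i) by ring.
      rewrite Rabs_right; lra.
    + replace (t + tau i - t) with (tau i) by ring. rewrite Rabs_right by lra.
      apply Rmult_lt_compat_l; lra.
  - intro i; apply Htau.
  - intro i. unfold tau. pose proof (pos_INR i). rewrite S_INR.
    apply Rmult_le_compat_l; [lra|]. apply Rinv_le_contravar; lra.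
  - intros eps Heps. destruct (Hsmall eps Heps) as [N HN]. exists N. intros i Hi.
    unfold R_dist. rewrite Rminus_0_r, Rabs_right by (destruct (Htau i); lra). apply HN, Hi.
  - intros eps Heps. destruct (Hv eps Heps) as [d [Hd Hq]].
    destruct (Hsmall d Hd) as [N HN]. exists N. intros i Hi. destruct (Htau i).
    specialize (Hq (t + tau i) (proj2 (Hin i)) ltac:(lra)).
    replace (t + tau i - t) with (tau i) in Hq by ring.
    apply Hq. rewrite Rabs_right by lra. apply HN, Hi.
Qed.

Lemma last_exit_time {n} (K : vset n) (psi : R -> vec n) a b :
  is_closed K -> vcontinuous_on psi a b -> a <= b -> K (psi a) -> ~ K (psi b) ->
  exists s, a <= s < b /\ K (psi s) /\ forall t, s < t <= b -> ~ K (psi t).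
Proof.
  intros Kcl Hcont Hab Ka Kb.
  set (S := fun t => a <= t <= b /\ K (psi t)).
  assert (Hbd : bound S) by (exists b; intros t [Ht _]; lra).
  assert (Sa : S a) by (split; [lra|exact Ka]).
  destruct (completeness S Hbd (ex_intro _ a Sa)) as [s Hs].
  assert (Has : a <= s) by apply (proj1 Hs), Sa.
  assert (Hsb : s <= b) by (apply (proj2 Hs); intros t [Ht _]; lra).
  assert (Ks : K (psi s)).
  { apply Kcl. intros eps Heps. destruct (Hcont s (conj Has Hsb) eps Heps) as [d [Hd Hnear]].
    destruct (lub_approx S s Hs d Hd) as [u [[Hu Ku] Hus]].
    exists (psi u). split; [exact Ku|]. apply Hnear; [exact Hu|apply Rabs_def1; lra]. }
  exists s. split; [split; [exact Has|]|split; [exact Ks|]].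
  - destruct (Req_dec s b) as [<-|]; [contradiction|lra].
  - intros t Ht Kt. assert (t <= s) by (apply (proj1 Hs); split; [lra|exact Kt]). lra.
Qed.

Lemma boundary_at_last_exit {n} (K : vset n) (psi : R -> vec n) a b s :
  vcontinuous_on psi a b -> a <= s < b -> K (psi s) -> (forall t, s < t <= b -> ~ K (psi t)) ->
  boundary K (psi s).
Proof.
  intros Hcont Hs Ks Hout. split; intros eps Heps.
  - exists (psi s). rewrite vnorm_sub_diag. split; [exact Ks|exact Heps].
  - destruct (Hcont s ltac:(lra) eps Heps) as [d [Hd Hnear]].
    set (t := Rmin (s + d / 2) b).
    assert (Ht : s < t <= b /\ t <= s + d / 2) by (unfold t, Rmin; destruct Rle_dec; lra).
    exists (psi t). split; [apply Hout; lra|]. apply Hnear; [lra|apply Rabs_def1; lra].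
Qed.

Lemma interior_of_interval (I : R -> Prop) a b s :
  (forall u, a <= u <= b -> I u) -> a < s < b -> interior_R I s.
Proof.
  intros HI Hs. exists (Rmin (s - a) (b - s)). split; [apply Rmin_glb_lt; lra|].
  intros u Hu. apply Rabs_def2 in Hu. apply HI.
  pose proof (Rmin_l (s - a) (b - s)). pose proof (Rmin_r (s - a) (b - s)). lra.
Qed.

Section Flow.

Variables (n : nat) (H : hybrid_system n) (K : vset n) (B : vec n -> R)
  (gradB : vec n -> vec n) (U : vset n) (I : R -> Prop) (psi : R -> vec n)
  (N : R -> Prop) (a b : R).

Hypothesis I_ab : forall s, a <= s <= b -> I s.
Hypothesis psi_ac : loc_abs_continuous_on psi I.
Hypothesis psi_C : forall s, a < s < b -> hs_C H (psi s).
Hypothesis N_null : null_set N.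
Hypothesis psi_deriv : forall t, I t -> ~ N t ->
  exists v, has_vderiv_within I psi t v /\ hs_F H (psi t) v.
Hypothesis gradB_flow : forall x eta, hs_C H x -> U x -> ~ K x ->
  hs_F H x eta -> tangent_cone (hs_C H) x eta -> dot (gradB x) eta <= 0.

Lemma barrier_nonincreasing_along_flow c d L : a < c <= d -> d < b -> 0 < L ->
  (forall t, c <= t <= d -> U (psi t) /\ ~ K (psi t) /\ has_gradient B (psi t) (gradB (psi t))) ->
  (forall t t', c <= t -> t <= t' -> t' <= d ->
     B (psi t') - B (psi t) <= L * vnorm (vsub (psi t') (psi t))) ->
  B (psi d) <= B (psi c).
Proof.
  intros Hc Hd HL Hnear Hlip.
  apply (nonincreasing_of_dini_nonpos_ae c d (fun t => B (psi t)) N); [lra|exact N_null| |].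
  - apply increments_abs_continuous_of_lipschitz with psi L; [exact HL| |exact Hlip].
    apply psi_ac; [lra|intros s Hs; apply I_ab; lra].
  - intros t Ht Nt. assert (It : I t) by (apply I_ab; lra).
    destruct (psi_deriv t It Nt) as [v [Hv Fv]].
    destruct (Hnear t Ht) as (Ut & Kt & Hgt).
    apply dini_nonpos_of_derivative with (dot (gradB (psi t)) v).
    + apply gradB_flow; auto; [apply psi_C; lra|].
      apply tangent_cone_of_vderiv with I a b; auto; lra.
    + intros eps Heps.
      destruct (has_gradient_chain B _ I psi t v Hgt Hv eps Heps) as [delta [Hdelta Hch]].
      exists delta. split; [exact Hdelta|]. intros u Hu Hut. apply Hch; [apply I_ab; lra|exact Hut].
Qed.

Hypothesis K_closed : is_closed K.
Hypothesis K_X : forall x, K x -> hs_X H x.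
Hypothesis B_C1 : C1_on (hs_X H) B gradB.
Hypothesis B_barrier : barrier_candidate H K B.
Hypothesis U_open : is_open U.
Hypothesis U_boundary : forall x, boundary K x -> U x.

Lemma flow_preserves_K : a < b -> K (psi a) -> K (psi b).
Proof.
  intros Hab Ka. apply NNPP; intro Kb.
  assert (Hcont : vcontinuous_on psi a b)
    by (apply abs_continuous_on_continuous, psi_ac; [lra|exact I_ab]).
  destruct (last_exit_time K psi a b K_closed Hcont (Rlt_le _ _ Hab) Ka Kb) as (s & Hs & Ks & Hout).
  set (x0 := psi s).
  destruct (C1_on_lipschitz_ball _ U B gradB x0 B_C1 (K_X x0 Ks) U_open
              (U_boundary x0 (boundary_at_last_exit K psi a b s Hcont Hs Ks Hout)))
    as (r & L & Hr & HL & Hball_r & Hlip).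
  destruct (Hcont s ltac:(lra) r ltac:(lra)) as [d [Hd Hnear]].
  set (t1 := Rmin (s + d / 2) ((s + b) / 2)).
  assert (Ht1 : s < t1 < b /\ t1 <= s + d / 2) by (unfold t1, Rmin; destruct Rle_dec; lra).
  assert (Hball : forall u, s <= u <= t1 -> vnorm (vsub (psi u) x0) < r)
    by (intros u Hu; apply Hnear; [lra|apply Rabs_def1; lra]).
  assert (Bt1 : B (psi t1) > 0)
    by (apply (proj2 B_barrier); [left; apply psi_C; lra|apply Hout; lra]).
  destruct (Hcont s ltac:(lra) (B (psi t1) / (2 * L))) as [d' [Hd' Hnear']].
  { apply Rdiv_lt_0_compat; lra. }
  set (c := s + Rmin d' (t1 - s) / 2).
  assert (Hc : s < c < t1 /\ c - s < d') by (unfold c, Rmin; destruct Rle_dec; lra).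
  assert (Bc : B (psi c) < B (psi t1)).
  { assert (Hx : vnorm (vsub (psi c) x0) < B (psi t1) / (2 * L))
      by (apply Hnear'; [lra|apply Rabs_def1; lra]).
    pose proof (Hlip x0 (psi c) ltac:(rewrite vnorm_sub_diag; lra) (Hball c ltac:(lra))).
    pose proof ((proj1 B_barrier) x0 Ks).
    assert (L * vnorm (vsub (psi c) x0) < L * (B (psi t1) / (2 * L)))
      by (apply Rmult_lt_compat_l; assumption).
    replace (L * (B (psi t1) / (2 * L))) with (B (psi t1) / 2) in * by (field; lra). lra. }
  assert (B (psi t1) <= B (psi c)); [|lra].
  apply barrier_nonincreasing_along_flow with L; [lra|lra|exact HL| |].
  - intros t Ht. destruct (Hball_r (psi t) (Hball t ltac:(lra))) as [Ut Hgt].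
    split; [exact Ut|]. split; [apply Hout; lra|exact Hgt].
  - intros t t' Htc Htt' Ht'. apply Hlip; apply Hball; lra.
Qed.

End Flow.

Lemma hybrid_time_domain_interval E j t : hybrid_time_domain E -> E t j ->
  exists a, a <= t /\ (forall s, a <= s <= t -> E s j) /\
    (j = O -> a = 0) /\ (forall j', j = S j' -> E a j').
Proof.
  intros [Hnn Hstruct] Ht.
  destruct (Hstruct t j Ht) as [tt (Htt0 & Hmono & Heq)].
  destruct (proj1 (Heq t j) (conj Ht (conj (conj (Hnn t j Ht) (Rle_refl t)) (Nat.le_refl _))))
    as [_ [Ht1 Ht2]].
  exists (tt j). split; [exact Ht1|]. split; [|split].
  - intros s Hs. apply (proj2 (Heq s j)). split; [apply Nat.le_refl|lra].
  - intros ->. exact Htt0.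
  - intros j' ->. apply (proj2 (Heq (tt (S j')) j')). split; [lia|].
    split; [apply Hmono; lia|lra].
Qed.

Section Solution.

Variables (n : nat) (H : hybrid_system n) (K : vset n) (B : vec n -> R)
  (gradB : vec n -> vec n) (U : vset n) (E : hset) (phi : R -> nat -> vec n).

Hypothesis phi_sol : is_solution H E phi.
Hypothesis K_closed : is_closed K.
Hypothesis K_X : forall x, K x -> hs_X H x.
Hypothesis B_C1 : C1_on (hs_X H) B gradB.
Hypothesis B_barrier : barrier_candidate H K B.
Hypothesis U_open : is_open U.
Hypothesis U_boundary : forall x, boundary K x -> U x.
Hypothesis gradB_flow : forall x eta, hs_C H x -> U x -> ~ K x ->
  hs_F H x eta -> tangent_cone (hs_C H) x eta -> dot (gradB x) eta <= 0.
Hypothesis B_jump : forall x eta, hs_D H x -> K x -> hs_G H x eta -> B eta <= 0.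
Hypothesis G_jump : forall x eta, hs_D H x -> K x -> hs_G H x eta -> hs_C H eta \/ hs_D H eta.

Lemma solution_flow_preserves_K j a t : a <= t -> (forall s, a <= s <= t -> E s j) ->
  K (phi a j) -> K (phi t j).
Proof.
  intros Hat HE Ka. destruct (Rle_lt_or_eq_dec a t Hat) as [Hlt|<-]; [|exact Ka].
  destruct phi_sol as ((_ & Hac) & _ & _ & Hflow & _).
  destruct (Hflow j (ex_intro _ _ (interior_of_interval (Ij E j) a t ((a + t) / 2) HE ltac:(lra))))
    as [Cint [N [HN Hder]]].
  apply (flow_preserves_K n H K B gradB U (Ij E j) (fun s => phi s j) N a t); auto.
  intros s Hs. apply Cint, (interior_of_interval _ a t _ HE Hs).
Qed.

Lemma solution_in_K : K (phi 0 O) -> forall j t, E t j -> K (phi t j).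
Proof.
  intros K0. destruct phi_sol as ((Htd & _) & _ & _ & _ & Hjump).
  induction j as [|j IH]; intros t Ht;
    destruct (hybrid_time_domain_interval E _ t Htd Ht) as (a & Hat & HE & Ha0 & HaS);
    apply (solution_flow_preserves_K _ a t Hat HE).
  - rewrite (Ha0 eq_refl). exact K0.
  - assert (Ej : E a j) by (apply HaS; reflexivity).
    destruct (Hjump a j Ej (HE a ltac:(lra))) as [HD HG].
    apply NNPP; intro Kout.
    pose proof (B_jump _ _ HD (IH a Ej) HG).
    assert (B (phi a (S j)) > 0); [|lra].
    apply (proj2 B_barrier); [|exact Kout].
    destruct (G_jump _ _ HD (IH a Ej) HG); tauto.
Qed.

End Solution.

Theorem theorem1 (n : nat) (H : hybrid_system n) (p : vec n -> bool)
  (B : vec n -> R) (gradB : vec n -> vec n) (U : vset n) :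
  standing_assumptions H ->
  outer_semicontinuous (hs_X H) (hs_F H) ->
  locally_bounded (hs_X H) (hs_F H) ->
  (forall x, hs_C H x -> (exists v, hs_F H x v) /\ convex_set (hs_F H x)) ->
  (forall x, hs_D H x -> exists v, hs_G H x v) ->
  let K : vset n := fun x => hs_X H x /\ p x = true in
  (exists x, K x) ->
  is_closed K ->
  (forall x, K x -> hs_C H x \/ hs_D H x) ->
  C1_on (hs_X H) B gradB ->
  barrier_candidate H K B ->
  is_open U -> (forall x, boundary K x -> U x) ->
  (forall x eta, hs_C H x -> U x -> ~ K x ->
     hs_F H x eta -> tangent_cone (hs_C H) x eta -> dot (gradB x) eta <= 0) ->
  (forall x eta, hs_D H x -> K x -> hs_G H x eta -> B eta <= 0) ->
  (forall x eta, hs_D H x -> K x -> hs_G H x eta -> hs_C H eta \/ hs_D H eta) ->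
  forall (E : hset) (phi : R -> nat -> vec n),
    is_solution H E phi -> p (phi 0 O) = true ->
    forall t j, E t j -> models_always E phi p t j.
Proof.
  intros Hsa _ _ _ _ K _ K_closed _ B_C1 B_barrier U_open U_boundary gradB_flow B_jump G_jump
    E phi Hsol Hp0 t j _ t' j' Ht' _.
  assert (K0 : K (phi 0 O)).
  { split; [|exact Hp0]. destruct Hsa as (_ & _ & _ & _ & Hclos).
    destruct Hsol as (_ & _ & Hinit & _). apply Hclos. tauto. }
  apply (solution_in_K n H K B gradB U E phi Hsol K_closed (fun x Kx => proj1 Kx)
           B_C1 B_barrier U_open U_boundary gradB_flow B_jump G_jump K0 j' t' Ht').
Qed.
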